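(* Let $3\le k\le d+1$. For $x_1,\ldots,x_k\in\mathbb S^{d-1}$ write $u_{i,j}=\langle x_i,x_j\rangle$, let $W$ be the Gram matrix of $x_3,\ldots,x_k$, $\operatorname{adj}(W)$ its adjugate, and $w_h=(u_{h,3},\ldots,u_{h,k})^T$ for $h=1,2$. Then the kernel $$Q_{k,1}^d(x_1,\ldots,x_k)=\det(W)\,u_{1,2}-w_1^T\operatorname{adj}(W)\,w_2$$ (which equals $\det(W)\langle y_1,y_2\rangle$, where $y_1,y_2$ are the orthogonal projections of $x_1,x_2$ onto the orthogonal complement of $\operatorname{span}\{x_3,\ldots,x_k\}$) is $k$-positive definite, and $I_{Q_{k,1}^d}$ is minimized over $\mathcal P(\mathbb S^{d-1})$ by $\sigma$.
   Context: $\mathbb S^{d-1}$ is the unit sphere in $\mathbb R^d$, $\mathcal P(\mathbb S^{d-1})$ the Borel probability measures, $\sigma$ the normalized surface measure; $I_K(\mu)=\int\cdots\int K(x_1,\ldots,x_k)\,d\mu(x_1)\cdots d\mu(x_k)$. A continuous kernel $K:(\mathbb S^{d-1})^k\to\mathbb R$ symmetric in its first two variables is $k$-positive definite if for all fixed $z_3,\ldots,z_k\in\mathbb S^{d-1}$ and every finite signed Borel measure $\nu$ on $\mathbb S^{d-1}$, $\int\int K(x,y,z_3,\ldots,z_k)\,d\nu(x)d\nu(y)\ge0$. *)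

From HB Require Import structures.
From mathcomp Require Import all_boot all_algebra.
From mathcomp Require Import all_classical all_reals all_analysis.
Set Implicit Arguments. Unset Strict Implicit. Unset Printing Implicit Defensive.
Import GRing.Theory Num.Theory.
Import numFieldNormedType.Exports.
Local Open Scope classical_set_scope.
Local Open Scope ring_scope.

(* Points of R^d are d-tuples of reals; d.-tuple R carries the product
   (= Borel) sigma-algebra of the library. *)
Notation vec R d := (d.-tuple R).

Definition dotv {R : realType} {d : nat} (x y : vec R d) : R :=
  \sum_(i < d) tnth x i * tnth y i.

Definition sphere (R : realType) (d : nat) : set (vec R d) :=
  [set x | dotv x x = 1].
Arguments sphere : clear implicits.

(* A k-point configuration is a map nat -> R^d, of which the entries
   0,...,k-1 are used (x_1 = x 0, x_2 = x 1, x_3 = x 2, ...). *)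

Definition gram_u {R : realType} {d : nat} (x : nat -> vec R d) (i j : nat) : R :=
  dotv (x i) (x j).

Definition Wmx {R : realType} {d : nat} (k : nat) (x : nat -> vec R d)
  : 'M[R]_(k - 2) := \matrix_(i, j) gram_u x (i + 2)%N (j + 2)%N.

Definition wvec {R : realType} {d : nat} (k : nat) (x : nat -> vec R d) (h : nat)
  : 'cV[R]_(k - 2) := \col_i gram_u x h (i + 2)%N.

Definition Qk1 {R : realType} {d : nat} (k : nat) (x : nat -> vec R d) : R :=
  \det (Wmx k x) * gram_u x 0 1
  - (((wvec k x 0)^T *m \adj (Wmx k x)) *m wvec k x 1) ord0 ord0.

Definition cfg {T : Type} (x y : T) (z : nat -> T) : nat -> T :=
  fun i => if i == 0%N then x else if i == 1%N then y else z i.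

Definition cint {R : realType} {d : nat} (nu : {charge set (vec R d) -> \bar R})
  (P N : set (vec R d)) (nuPN : hahn_decomposition nu P N) (f : vec R d -> R) : R :=
  Rintegral (jordan_pos nuPN) (sphere R d) f - Rintegral (jordan_neg nuPN) (sphere R d) f.

(* k-positive definiteness of a kernel K on (S^{d-1})^k (symmetry in the
   first two variables is part of the notion) *)
Definition k_pos_def {R : realType} {d : nat} (k : nat) (K : (nat -> vec R d) -> R) : Prop :=
  (forall (x y : vec R d) (z : nat -> vec R d),
      sphere R d x -> sphere R d y ->
      (forall i, (2 <= i < k)%N -> sphere R d (z i)) ->
      K (cfg x y z) = K (cfg y x z)) /\
  (forall z : nat -> vec R d,
      (forall i, (2 <= i < k)%N -> sphere R d (z i)) ->
      forall (nu : {charge set (vec R d) -> \bar R}) (P N : set (vec R d))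
             (nuPN : hahn_decomposition nu P N),
        0 <= cint nuPN (fun y => cint nuPN (fun x => K (cfg x y z)))).

Fixpoint iter_int {R : realType} {d : nat} (mu : {measure set (vec R d) -> \bar R})
  (n : nat) (F : seq (vec R d) -> R) : R :=
  match n with
  | 0 => F [::]
  | n.+1 => Rintegral mu (sphere R d) (fun x => iter_int mu n (fun s => F (x :: s)))
  end.

Definition energy {R : realType} {d : nat} (k : nat) (K : (nat -> vec R d) -> R)
  (mu : {measure set (vec R d) -> \bar R}) : R :=
  iter_int mu k (fun s => K (fun i => nth (nseq_tuple d 0) s i)).

(* Borel probability measures on S^{d-1}: probabilities on R^d concentrated on the sphere *)
Definition sphere_prob {R : realType} {d : nat} (mu : probability (vec R d) R) : Prop :=
  mu (sphere R d) = 1%E.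

Definition mxact {R : realType} {d : nat} (U : 'M[R]_d) (x : vec R d) : vec R d :=
  [tuple \sum_(j < d) U i j * tnth x j | i < d].

(* sigma = normalized surface measure on S^{d-1}, characterized as the
   (unique) Borel probability measure on S^{d-1} invariant under O(d) *)
Definition is_normalized_surface_measure {R : realType} {d : nat}
  (sigma : probability (vec R d) R) : Prop :=
  sigma (sphere R d) = 1%E /\
  forall U : 'M[R]_d, U *m U^T = 1%:M ->
    forall A : set (vec R d), measurable A -> sigma (mxact U @^-1` A) = sigma A.

From HB Require Import structures.
From mathcomp Require Import all_boot all_algebra.
From mathcomp Require Import all_classical all_reals all_analysis.
From mathcomp Require Import all_order lra measurable_realfun.

Set Implicit Arguments.
Unset Strict Implicit.
Unset Printing Implicit Defensive.
Import Order.TTheory GRing.Theory Num.Theory.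
Local Open Scope classical_set_scope.
Local Open Scope ring_scope.

(* Fix x_3, ..., x_k and let Z be the d x (k-2) matrix with columns x_3, ..., x_k.  Then
   Q(x, y) = x^T P y  with  P = det(Z^T Z) I - Z adj(Z^T Z) Z^T,  i.e. det(Z^T Z) times the
   orthogonal projection onto span(Z)^perp.  P is positive semidefinite: det(Z^T Z) >= 0 by
   Gaussian elimination, and D x^T P x = |D x - Z adj(Z^T Z) Z^T x|^2 when D = det(Z^T Z) > 0.
   Since Q is bilinear in (x, y), its double integral against a signed measure nu is
   c^T P c >= 0, c being the barycenter of nu.  Likewise I_Q(mu) = m^T Pbar m, with m the
   barycenter of mu and Pbar the average of P over x_3, ..., x_k, again positive semidefinite.
   The surface measure is invariant under x |-> -x, so its barycenter vanishes and
   I_Q(sigma) = 0 <= I_Q(mu).  Exchanging the integrals with finite sums needs every partial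
   iterated integral to be integrable; this holds because all integrands are polynomials in the
   coordinates, which are bounded on the sphere.  Neither k <= d + 1 nor x_3, ..., x_k being
   unit vectors is needed. *)

Definition tcol (T : Type) n (x : n.-tuple T) : 'cV[T]_n := \col_a tnth x a.

Section BilinearForms.
Variables (R : comPzRingType) (n : nat).
Implicit Types (K : 'M[R]_n) (u v : 'cV[R]_n).

Definition bform K u v : R := (u^T *m K *m v) ord0 ord0.

Lemma bform_tr K u v : bform K u v = bform K^T v u.
Proof.
rewrite /bform -[in LHS](trmxK (u^T *m K *m v)) [LHS]mxE.
by rewrite !trmx_mul trmxK mulmxA.
Qed.

Lemma bformBl K u1 u2 v : bform K (u1 - u2) v = bform K u1 v - bform K u2 v.
Proof. by rewrite /bform linearB /= !mulmxBl [LHS]mxE [X in _ + X]mxE. Qed.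

Lemma bformBr K u v1 v2 : bform K u (v1 - v2) = bform K u v1 - bform K u v2.
Proof. by rewrite /bform mulmxBr [LHS]mxE [X in _ + X]mxE. Qed.

Lemma bform0 K : bform K 0 0 = 0.
Proof. by rewrite /bform mulmx0 mxE. Qed.

Lemma bformEl K u v : bform K u v = \sum_l u l ord0 * (K *m v) l ord0.
Proof. by rewrite /bform -mulmxA mxE; apply: eq_bigr => l _; rewrite mxE. Qed.

Lemma bformEr K u v : bform K u v = \sum_m (u^T *m K) ord0 m * v m ord0.
Proof. by rewrite /bform mxE. Qed.

Lemma bform_pairE K u v :
  bform K u v = \sum_(p : 'I_n * 'I_n) (u p.1 ord0 * v p.2 ord0) * K p.1 p.2.
Proof.
rewrite bformEl -(pair_bigA _ (fun l m => u l ord0 * v m ord0 * K l m)).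
apply: eq_bigr => l _; rewrite mxE mulr_sumr.
by apply: eq_bigr => m _; rewrite mulrA mulrAC.
Qed.

End BilinearForms.

Section GramMatrices.
Variable R : realFieldType.

Lemma gram_diag_ge0 m n (Y : 'M[R]_(m, n)) j : 0 <= (Y^T *m Y) j j.
Proof. by rewrite mxE; apply: sumr_ge0 => a _; rewrite !mxE -expr2 sqr_ge0. Qed.

Lemma gram_diag_eq0 m n (Y : 'M[R]_(m, n)) j :
  (Y^T *m Y) j j = 0 -> forall a, Y a j = 0.
Proof.
rewrite mxE => /psumr_eq0P Y0 a; apply/eqP; rewrite -sqrf_eq0 expr2.
have := Y0 _ a isT; rewrite mxE => -> //.
by move=> b _; rewrite !mxE -expr2 sqr_ge0.
Qed.

Lemma det_gram_ge0 m n (X : 'M[R]_(m, n)) : 0 <= \det (X^T *m X).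
Proof.
elim: n X => [|n IH] X; first by rewrite det_mx00.
move: X; change (forall X : 'M[R]_(m, 1 + n), 0 <= \det (X^T *m X)) => X.
rewrite -[X]hsubmxK; set x := lsubmx _; set Y := rsubmx _.
set c := (x^T *m x) ord0 ord0.
have xx : x^T *m x = c%:M by rewrite [LHS]mx11_scalar.
have [c0|c_neq0] := eqVneq c 0.
  have -> : x = 0 by apply/colP => a; rewrite [RHS]mxE; exact: (gram_diag_eq0 (j := ord0) c0).
  rewrite tr_row_mx mul_col_row !(trmx0, mul0mx, mulmx0) det_ublock.
  by rewrite det_mx11 mxE mul0r.
(* Orthogonalize the remaining columns against the first one. *)
set E : 'M[R]_(1 + n) := block_mx 1%:M (- c^-1 *: (x^T *m Y)) 0 1%:M.
have detE : \det E = 1 by rewrite det_ublock !det1 mulr1.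
have -> : \det ((row_mx x Y)^T *m row_mx x Y) =
          \det ((row_mx x Y *m E)^T *m (row_mx x Y *m E)).
  by rewrite trmx_mul -mulmxA !det_mulmx det_tr detE mul1r mulmxA det_mulmx detE mulr1.
rewrite mul_row_block !(mulmx1, mulmx0, addr0) tr_row_mx mul_col_row.
set Y' := _ + Y.
have xY' : x^T *m Y' = 0.
  by rewrite mulmxDr mulmxA xx mul_scalar_mx scalerA mulrN divff // scaleN1r addNr.
have Y'x : Y'^T *m x = 0 by rewrite -[x]trmxK -trmx_mul xY' trmx0.
rewrite xY' Y'x det_ublock xx det_scalar expr1 mulr_ge0 ?IH //.
by have := gram_diag_ge0 x ord0.
Qed.

(* The adjugate in place of the inverse keeps [perp_proj_mx Z] polynomial in [Z],
   also where [Z^T Z] is singular. *)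
Definition perp_proj_mx d n (Z : 'M[R]_(d, n)) : 'M[R]_d :=
  \det (Z^T *m Z) *: 1%:M - Z *m \adj (Z^T *m Z) *m Z^T.

Lemma perp_proj_mx_tr d n (Z : 'M[R]_(d, n)) : (perp_proj_mx Z)^T = perp_proj_mx Z.
Proof.
rewrite /perp_proj_mx linearB /= linearZ /= tr_scalar_mx !trmx_mul trmxK.
by rewrite trmx_adj trmx_mul trmxK mulmxA.
Qed.

Lemma perp_proj_mx_psd d n (Z : 'M[R]_(d, n)) (v : 'cV[R]_d) :
  0 <= bform (perp_proj_mx Z) v v.
Proof.
set W := Z^T *m Z; set A := \adj W; set D := \det W.
have AT : A^T = A by rewrite /A trmx_adj /W trmx_mul trmxK.
have AW : A *m W = D%:M by exact: mul_adj_mx.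
have [D0|D_neq0] := eqVneq D 0.
  have ZA0 : Z *m A = 0.
    have ZA_gram0 : (Z *m A)^T *m (Z *m A) = 0.
      by rewrite trmx_mul AT -mulmxA (mulmxA Z^T) -/W mulmxA AW D0 mul_scalar_mx scale0r.
    apply/matrixP => a j; rewrite [RHS]mxE; apply: (gram_diag_eq0 (j := j)).
    by rewrite ZA_gram0 mxE.
  by rewrite /bform /perp_proj_mx -/W -/D -/A D0 scale0r sub0r ZA0 !(mul0mx, mulmx0, oppr0) mxE.
have D_gt0 : 0 < D by rewrite lt0r D_neq0 det_gram_ge0.
(* [D * v^T P v = |D v - Z A Z^T v|^2] *)
set y := D *: v - Z *m (A *m (Z^T *m v)).
have yy : y^T *m y = D *: (v^T *m perp_proj_mx Z *m v).
  rewrite /y [(D *: v - _)^T]linearB /= [(D *: v)^T]linearZ /= !trmx_mul trmxK AT.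
  rewrite mulmxBl !mulmxBr -!scalemxAl -!scalemxAr !scalerA !mulmxA.
  rewrite -!(mulmxA _ _ Z) -/W -!(mulmxA _ A) AW mul_mx_scalar.
  rewrite -!scalemxAl subrr subr0 /perp_proj_mx -/W -/D -/A mulmx1 mulmxBl.
  by rewrite -scalemxAl scalerBr scalerA !mulmxA.
by have := gram_diag_ge0 y ord0; rewrite yy mxE pmulr_rge0.
Qed.

End GramMatrices.


Section FunctionClosure.
Variables (R : pzRingType) (X : Type) (P : (X -> R) -> Prop).
Hypothesis P_cst : forall c, P (fun _ => c).
Hypothesis P_add : forall f g, P f -> P g -> P (fun x => f x + g x).
Hypothesis P_mul : forall f g, P f -> P g -> P (fun x => f x * g x).

Lemma closed_sum I (r : seq I) (Q : pred I) (F : I -> X -> R) :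
  (forall i, P (F i)) -> P (fun x => \sum_(i <- r | Q i) F i x).
Proof. by move=> PF; rewrite -fct_sumE; apply: big_ind => //; exact: P_cst. Qed.

Lemma closed_prod I (r : seq I) (Q : pred I) (F : I -> X -> R) :
  (forall i, P (F i)) -> P (fun x => \prod_(i <- r | Q i) F i x).
Proof. by move=> PF; rewrite -fct_prodE; apply: big_ind => //; exact: P_cst. Qed.

Lemma closed_sub f g : P f -> P g -> P (fun x => f x - g x).
Proof.
move=> Pf Pg; apply: P_add => //.
by under eq_fun do rewrite -mulN1r; apply: P_mul.
Qed.

End FunctionClosure.

Section Sphere.
Variables (R : realType) (d : nat).
Local Notation V := (vec R d).
Local Notation v0 := (nseq_tuple d (0 : R)).

(* Iterated integrals are linear on this class: each partial integral of a coordinate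
   polynomial is again bounded and measurable (see [coord_poly_split]). *)
Inductive coord_poly : (seq V -> R) -> Prop :=
| coord_poly_cst c : coord_poly (fun _ => c)
| coord_poly_coord i a : coord_poly (fun s => tnth (nth v0 s i) a)
| coord_poly_add F G : coord_poly F -> coord_poly G -> coord_poly (fun s => F s + G s)
| coord_poly_mul F G : coord_poly F -> coord_poly G -> coord_poly (fun s => F s * G s).

Lemma coord_poly_sum I (r : seq I) (Q : pred I) (F : I -> seq V -> R) :
  (forall i, coord_poly (F i)) -> coord_poly (fun s => \sum_(i <- r | Q i) F i s).
Proof. exact: (@closed_sum R _ coord_poly coord_poly_cst coord_poly_add). Qed.

Lemma coord_poly_prod I (r : seq I) (Q : pred I) (F : I -> seq V -> R) :
  (forall i, coord_poly (F i)) -> coord_poly (fun s => \prod_(i <- r | Q i) F i s).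
Proof. exact: (@closed_prod R _ coord_poly coord_poly_cst coord_poly_mul). Qed.

Lemma coord_poly_sub F G : coord_poly F -> coord_poly G -> coord_poly (fun s => F s - G s).
Proof. exact: (@closed_sub R _ coord_poly coord_poly_cst coord_poly_add coord_poly_mul). Qed.

Lemma coord_poly_cons x F : coord_poly F -> coord_poly (fun s => F (x :: s)).
Proof.
elim=> [c|[|i] a|F' G _ pF _ pG|F' G _ pF _ pG] /=.
- exact: coord_poly_cst.
- exact: coord_poly_cst.
- exact: coord_poly_coord.
- exact: coord_poly_add.
- exact: coord_poly_mul.
Qed.

Definition coord_poly_mx m n (M : seq V -> 'M[R]_(m, n)) :=
  forall i j, coord_poly (fun s => M s i j).

Lemma coord_poly_mxB m n (A B : seq V -> 'M[R]_(m, n)) :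
  coord_poly_mx A -> coord_poly_mx B -> coord_poly_mx (fun s => A s - B s).
Proof. by move=> pA pB i j; under eq_fun do rewrite !mxE; exact: coord_poly_sub. Qed.

Lemma coord_poly_mxM m n p (A : seq V -> 'M[R]_(m, n)) (B : seq V -> 'M[R]_(n, p)) :
  coord_poly_mx A -> coord_poly_mx B -> coord_poly_mx (fun s => A s *m B s).
Proof.
move=> pA pB i j; under eq_fun do rewrite mxE.
by apply: coord_poly_sum => l; exact: coord_poly_mul.
Qed.

Lemma coord_poly_trmx m n (A : seq V -> 'M[R]_(m, n)) :
  coord_poly_mx A -> coord_poly_mx (fun s => (A s)^T).
Proof. by move=> pA i j; under eq_fun do rewrite mxE. Qed.

Lemma coord_poly_det n (A : seq V -> 'M[R]_n) :
  coord_poly_mx A -> coord_poly (fun s => \det (A s)).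
Proof.
move=> pA; apply: coord_poly_sum => sg.
by apply: coord_poly_mul; [exact: coord_poly_cst | apply: coord_poly_prod].
Qed.

Lemma coord_poly_adj n (A : seq V -> 'M[R]_n) :
  coord_poly_mx A -> coord_poly_mx (fun s => \adj (A s)).
Proof.
move=> pA i j; under eq_fun do rewrite mxE.
apply: coord_poly_mul; first exact: coord_poly_cst.
by apply: coord_poly_det => i' j'; under eq_fun do rewrite !mxE.
Qed.

Lemma coord_poly_perp_proj_mx m n (Z : seq V -> 'M[R]_(m, n)) :
  coord_poly_mx Z -> coord_poly_mx (fun s => perp_proj_mx (Z s)).
Proof.
move=> pZ; have pW := coord_poly_mxM (coord_poly_trmx pZ) pZ.
apply: coord_poly_mxB => [i j|].
  under eq_fun do rewrite !mxE.
  by apply: coord_poly_mul; [exact: coord_poly_det | exact: coord_poly_cst].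
by apply: coord_poly_mxM (coord_poly_trmx pZ); apply: coord_poly_mxM pZ (coord_poly_adj pW).
Qed.

Definition bounded_measurable (f : V -> R) :=
  measurable_fun setT f /\ exists C, forall x, sphere R d x -> `|f x| <= C.

Lemma bounded_measurable_cst c : bounded_measurable (fun _ => c).
Proof. by split; [exact: measurable_cst | exists `|c|]. Qed.

Lemma bounded_measurable_add f g :
  bounded_measurable f -> bounded_measurable g -> bounded_measurable (fun x => f x + g x).
Proof.
move=> [mf [C1 f_le]] [mg [C2 g_le]]; split; first exact: measurable_funD.
by exists (C1 + C2) => x Sx; rewrite (le_trans (ler_normD _ _)) // lerD ?f_le ?g_le.
Qed.

Lemma bounded_measurable_mul f g :
  bounded_measurable f -> bounded_measurable g -> bounded_measurable (fun x => f x * g x).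
Proof.
move=> [mf [C1 f_le]] [mg [C2 g_le]]; split; first exact: measurable_funM.
by exists (C1 * C2) => x Sx; rewrite normrM ler_pM ?f_le ?g_le.
Qed.

Lemma bounded_measurable_sum I (r : seq I) (F : I -> V -> R) :
  (forall i, bounded_measurable (F i)) -> bounded_measurable (fun x => \sum_(i <- r) F i x).
Proof. exact: (@closed_sum R _ _ bounded_measurable_cst bounded_measurable_add). Qed.

Lemma bounded_measurable_coord a : bounded_measurable (fun x => tnth x a).
Proof.
split; first exact: measurable_tnth.
exists 1 => x; rewrite /sphere /= /dotv => x1.
have : tnth x a ^+ 2 <= 1.
  rewrite -x1 (bigD1 a) //= expr2 lerDl.
  by apply: sumr_ge0 => i _; rewrite -expr2 sqr_ge0.
by rewrite ler_norml => ?; apply/andP; split; nra.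
Qed.

Lemma measurable_sphere : measurable (sphere R d).
Proof.
have [mdot _] : bounded_measurable (fun x => dotv x x).
  apply: bounded_measurable_sum => i.
  by apply: bounded_measurable_mul; exact: bounded_measurable_coord.
by have := mdot measurableT [set 1] (measurable_set1 1); rewrite setTI.
Qed.

Local Hint Resolve measurable_sphere : core.

Lemma coord_poly_split F : coord_poly F ->
  exists (I : finType) (f : I -> V -> R) (G : I -> seq V -> R),
    (forall i, bounded_measurable (f i) /\ coord_poly (G i)) /\
    forall x s, F (x :: s) = \sum_i f i x * G i s.
Proof.
elim=> [c|[|j] a|F1 F2 _ [I1 [f1 [G1 [h1 e1]]]] _ [I2 [f2 [G2 [h2 e2]]]]
               |F1 F2 _ [I1 [f1 [G1 [h1 e1]]]] _ [I2 [f2 [G2 [h2 e2]]]]].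
- exists (ordinal 1), (fun _ _ => 1), (fun _ _ => c); split=> [_|x s].
    by split; [exact: bounded_measurable_cst | exact: coord_poly_cst].
  by rewrite big_ord1 mul1r.
- exists (ordinal 1), (fun _ x => tnth x a), (fun _ _ => 1); split=> [_|x s].
    by split; [exact: bounded_measurable_coord | exact: coord_poly_cst].
  by rewrite big_ord1 mulr1.
- exists (ordinal 1), (fun _ _ => 1), (fun _ s => tnth (nth v0 s j) a); split=> [_|x s].
    by split; [exact: bounded_measurable_cst | exact: coord_poly_coord].
  by rewrite big_ord1 mul1r.
- exists (I1 + I2)%type, (fun i => match i with inl i1 => f1 i1 | inr i2 => f2 i2 end),
    (fun i => match i with inl i1 => G1 i1 | inr i2 => G2 i2 end).
  by split=> [[i1|i2] //|x s]; rewrite big_sumType e1 e2.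
- exists (I1 * I2)%type, (fun i x => f1 i.1 x * f2 i.2 x), (fun i s => G1 i.1 s * G2 i.2 s).
  split=> [i|x s].
    have [[bf1 pG1] [bf2 pG2]] := (h1 i.1, h2 i.2).
    by split; [exact: bounded_measurable_mul | exact: coord_poly_mul].
  rewrite e1 e2 mulr_suml -(pair_bigA _ (fun i1 i2 => f1 i1 x * f2 i2 x * (G1 i1 s * G2 i2 s))).
  apply: eq_bigr => i1 _.
  by rewrite mulr_sumr; apply: eq_bigr => i2 _; rewrite mulrACA.
Qed.

Lemma finite_measure_sphere_lty (mu : {finite_measure set V -> \bar R}) :
  (mu (sphere R d) < +oo)%E.
Proof. by have := fin_num_measure mu _ measurable_sphere; rewrite fin_numElt => /andP[]. Qed.

Section SphereIntegrals.
Variable mu : {measure set V -> \bar R}.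
Local Notation S := (sphere R d).

Lemma iter_int_ge0 n F : (forall s, 0 <= F s) -> 0 <= iter_int mu n F.
Proof.
elim: n F => [|n IH] F F_ge0 /=; first exact: F_ge0.
by apply: Rintegral_ge0 => x _; exact: IH.
Qed.

Hypothesis mu_sphere_lty : (mu S < +oo)%E.

Lemma bounded_measurable_integrable f : bounded_measurable f -> mu.-integrable S (EFin \o f).
Proof.
move=> [mf [C f_le]]; apply: measurable_bounded_integrable => //.
- exact: measurable_funS mf.
- exists C; split; first exact: num_real.
  by move=> M CM x Sx; exact: le_trans (f_le x Sx) (ltW CM).
Qed.

Lemma Rintegral_sum I (r : seq I) (F : I -> V -> R) :
  (forall i, bounded_measurable (F i)) ->
  Rintegral mu S (fun x => \sum_(i <- r) F i x) = \sum_(i <- r) Rintegral mu S (F i).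
Proof.
move=> bF; elim: r => [|i r IH].
  under eq_Rintegral do rewrite big_nil.
  by rewrite big_nil Rintegral_cst ?mul0r.
under eq_Rintegral do rewrite big_cons.
rewrite big_cons RintegralD ?IH //; apply: bounded_measurable_integrable => //.
exact: bounded_measurable_sum.
Qed.

Lemma Rintegral_invariant (phi : V -> V) f :
  measurable_fun setT phi -> (forall A, measurable A -> mu (phi @^-1` A) = mu A) ->
  phi @^-1` S = S -> bounded_measurable f -> bounded_measurable (f \o phi) ->
  Rintegral mu S (f \o phi) = Rintegral mu S f.
Proof.
move=> mphi phi_inv phiS [mf _] /bounded_measurable_integrable.
rewrite -{1}phiS => int_fphi.
have mEf : measurable_fun setT (EFin \o f) by apply/measurable_EFinP.
have := integral_pushforward mphi mEf int_fphi measurable_sphere.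
rewrite (eq_measure_integral mu) => [|A mA _]; last exact: phi_inv.
by rewrite phiS /Rintegral => ->.
Qed.

Definition iter_int_linear n := forall (I : finType) (c : I -> R) (F : I -> seq V -> R),
  (forall i, coord_poly (F i)) ->
  iter_int mu n (fun s => \sum_i c i * F i s) = \sum_i c i * iter_int mu n (F i).

Lemma bounded_measurable_iter_int n F : iter_int_linear n -> coord_poly F ->
  bounded_measurable (fun x => iter_int mu n (fun s => F (x :: s))).
Proof.
move=> lin_n /coord_poly_split[I [f [G [fG FE]]]].
have -> : (fun x => iter_int mu n (fun s => F (x :: s))) =
          (fun x => \sum_i f i x * iter_int mu n (G i)).
  apply: funext => x; under eq_fun do rewrite FE.
  by apply: lin_n => i; have [] := fG i.
apply: bounded_measurable_sum => i; apply: bounded_measurable_mul.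
  by have [] := fG i.
exact: bounded_measurable_cst.
Qed.

Lemma iter_int_is_linear n : iter_int_linear n.
Proof.
elim: n => [//|n IH] I c F pF /=.
have bF i : bounded_measurable (fun x => iter_int mu n (fun s => F i (x :: s))).
  exact: bounded_measurable_iter_int.
have inner x : iter_int mu n (fun s => \sum_i c i * F i (x :: s)) =
               \sum_i c i * iter_int mu n (fun s => F i (x :: s)).
  by apply: IH => i; exact: coord_poly_cons.
under eq_Rintegral do rewrite inner.
rewrite Rintegral_sum => [|i]; last exact/bounded_measurable_mul/bF/bounded_measurable_cst.
by apply: eq_bigr => i _; rewrite RintegralZl //; exact: bounded_measurable_integrable.
Qed.

Lemma iter_int_bform n (M : seq V -> 'M[R]_d) u v : coord_poly_mx M ->
  iter_int mu n (fun s => bform (M s) u v) =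
  bform (\matrix_(l, m) iter_int mu n (fun s => M s l m)) u v.
Proof.
move=> pM; under eq_fun do rewrite bform_pairE.
rewrite iter_int_is_linear // bform_pairE.
by apply: eq_bigr => p _; rewrite mxE.
Qed.

Definition barycenter : 'cV[R]_d := \col_l Rintegral mu S (fun x => tnth x l).

Lemma Rintegral_coord_comb (c : 'I_d -> R) :
  Rintegral mu S (fun x => \sum_l tnth x l * c l) = \sum_l barycenter l ord0 * c l.
Proof.
rewrite Rintegral_sum => [|l]; last first.
  exact/bounded_measurable_mul/bounded_measurable_cst/bounded_measurable_coord.
apply: eq_bigr => l _; rewrite RintegralZr ?mxE //.
exact/bounded_measurable_integrable/bounded_measurable_coord.
Qed.

Lemma Rintegral_bforml K v :
  Rintegral mu S (fun x => bform K (tcol x) v) = bform K barycenter v.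
Proof.
under eq_Rintegral do rewrite bformEl.
rewrite bformEl -Rintegral_coord_comb; apply: eq_Rintegral => x _.
by apply: eq_bigr => l _; rewrite mxE.
Qed.

Lemma Rintegral_bformr K u :
  Rintegral mu S (fun y => bform K u (tcol y)) = bform K u barycenter.
Proof.
under eq_Rintegral do rewrite bformEr.
rewrite bformEr; under eq_bigr do rewrite mulrC.
rewrite -Rintegral_coord_comb; apply: eq_Rintegral => y _.
by apply: eq_bigr => m _; rewrite [tcol y m ord0]mxE mulrC.
Qed.

End SphereIntegrals.

Lemma mxactN1 (x : V) i : tnth (mxact (- 1%:M) x) i = - tnth x i.
Proof.
rewrite /mxact tnth_mktuple (bigD1 i) //= big1 ?addr0; first by rewrite !mxE eqxx mulN1r.
by move=> j ji; rewrite !mxE eq_sym (negbTE ji) oppr0 mul0r.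
Qed.

(* Invariance under the antipodal map x |-> -x. *)
Lemma barycenter_surface_eq0 (sigma : probability V R) :
  is_normalized_surface_measure sigma -> barycenter sigma = 0.
Proof.
move=> [_ sigma_inv]; set T := mxact (- 1%:M : 'M[R]_d).
have T_orth : (- 1%:M : 'M[R]_d) *m (- 1%:M)^T = 1%:M.
  by rewrite linearN /= trmx1 mulmxN mulNmx opprK mulmx1.
have TE x i : tnth (T x) i = -1 * tnth x i by rewrite /T mxactN1 mulN1r.
have bT i : bounded_measurable (fun x => tnth (T x) i).
  under eq_fun do rewrite TE.
  exact/bounded_measurable_mul/bounded_measurable_coord/bounded_measurable_cst.
have mT : measurable_fun setT T by apply/measurable_fun_tnthP => i; have [] := bT i.
have TS : T @^-1` sphere R d = sphere R d.
  have dotT x : dotv (T x) (T x) = dotv x x.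
    by apply: eq_bigr => i _; rewrite !TE !mulN1r mulrNN.
  by apply/seteqP; split=> x; rewrite /preimage /sphere /= dotT.
have sigma_lty := finite_measure_sphere_lty sigma.
apply/colP => l; rewrite !mxE.
have := Rintegral_invariant sigma_lty mT (sigma_inv _ T_orth) TS
  (bounded_measurable_coord l) (bT l).
have -> : (fun x => tnth x l) \o T = (fun x => -1 * tnth x l).
  by apply: funext => x; exact: TE.
rewrite RintegralZl //; last first.
  by apply: bounded_measurable_integrable => //; exact: bounded_measurable_coord.
by move=> ?; lra.
Qed.

Definition tail_mx k (z : nat -> V) : 'M[R]_(d, k - 2) := \matrix_(a, i) tnth (z (i + 2)%N) a.

Lemma Qk1_cfgE k (x y : V) (z : nat -> V) :
  Qk1 k (cfg x y z) = bform (perp_proj_mx (tail_mx k z)) (tcol x) (tcol y).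
Proof.
set Z := tail_mx k z.
have W_gram : Wmx k (cfg x y z) = Z^T *m Z.
  apply/matrixP => i j; rewrite !mxE /gram_u /dotv !addn2 /cfg /=.
  by apply: eq_bigr => a _; rewrite !mxE !addn2.
have w_tcol h : wvec k (cfg x y z) h = Z^T *m tcol (cfg x y z h).
  apply/matrixP => i j; rewrite !mxE /gram_u /dotv !addn2 /=.
  by apply: eq_bigr => a _; rewrite !mxE !addn2 mulrC.
rewrite /Qk1 W_gram !w_tcol /bform /perp_proj_mx trmx_mul trmxK.
rewrite mulmxBr mulmxBl [RHS]mxE [X in _ = _ + X]mxE !mulmxA; congr (_ - _).
rewrite -scalemxAr mulmx1 -scalemxAl mxE /gram_u /dotv /= mxE.
by congr (_ * _); apply: eq_bigr => l _; rewrite !mxE.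
Qed.

Lemma Qk1_cfgC k (x y : V) (z : nat -> V) : Qk1 k (cfg x y z) = Qk1 k (cfg y x z).
Proof. by rewrite !Qk1_cfgE bform_tr perp_proj_mx_tr. Qed.

Definition charge_barycenter (nu : {charge set V -> \bar R}) P N
  (nuPN : hahn_decomposition nu P N) : 'cV[R]_d :=
  barycenter (jordan_pos nuPN) - barycenter (jordan_neg nuPN).

Lemma cint_bforml nu P N (nuPN : hahn_decomposition nu P N) K v :
  cint nuPN (fun x => bform K (tcol x) v) = bform K (charge_barycenter nuPN) v.
Proof. by rewrite /cint !Rintegral_bforml ?finite_measure_sphere_lty // bformBl. Qed.

Lemma cint_bformr nu P N (nuPN : hahn_decomposition nu P N) K u :
  cint nuPN (fun y => bform K u (tcol y)) = bform K u (charge_barycenter nuPN).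
Proof. by rewrite /cint !Rintegral_bformr ?finite_measure_sphere_lty // bformBr. Qed.

Lemma Qk1_cint_ge0 k (z : nat -> V) nu P N (nuPN : hahn_decomposition nu P N) :
  0 <= cint nuPN (fun y => cint nuPN (fun x => Qk1 k (cfg x y z))).
Proof.
under eq_fun do under eq_fun do rewrite Qk1_cfgE.
under eq_fun do rewrite cint_bforml.
by rewrite cint_bformr perp_proj_mx_psd.
Qed.

Definition pad2 (s : seq V) : nat -> V := nth v0 [:: v0, v0 & s].

Lemma cfg_pad2 (x y : V) s : cfg x y (pad2 s) = nth v0 [:: x, y & s].
Proof. by apply: funext => -[|[|i]]. Qed.

Lemma coord_poly_tail_proj k : coord_poly_mx (fun s => perp_proj_mx (tail_mx k (pad2 s))).
Proof.
apply: coord_poly_perp_proj_mx => a i; under eq_fun do rewrite mxE addn2.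
exact: coord_poly_coord.
Qed.

Definition mean_proj_mx (mu : {measure set V -> \bar R}) n : 'M[R]_d :=
  \matrix_(l, m) iter_int mu n (fun s => perp_proj_mx (tail_mx n.+2 (pad2 s)) l m).

Section Energy.
Variable mu : {measure set V -> \bar R}.
Hypothesis mu_sphere_lty : (mu (sphere R d) < +oo)%E.

Lemma mean_proj_mx_psd n u : 0 <= bform (mean_proj_mx mu n) u u.
Proof.
rewrite /mean_proj_mx -iter_int_bform //; last exact: coord_poly_tail_proj.
by apply: iter_int_ge0 => s; exact: perp_proj_mx_psd.
Qed.

Lemma energy_Qk1E n :
  energy n.+2 (@Qk1 R d n.+2) mu = bform (mean_proj_mx mu n) (barycenter mu) (barycenter mu).
Proof.
have inner x y : iter_int mu n (fun s => Qk1 n.+2 (fun i => nth v0 [:: x, y & s] i)) =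
                 bform (mean_proj_mx mu n) (tcol x) (tcol y).
  rewrite /mean_proj_mx -iter_int_bform //; last exact: coord_poly_tail_proj.
  by congr iter_int; apply: funext => s; rewrite -Qk1_cfgE cfg_pad2.
rewrite /energy /=; under eq_Rintegral do under eq_Rintegral do rewrite inner.
under eq_Rintegral do rewrite Rintegral_bformr //.
by rewrite Rintegral_bforml.
Qed.

End Energy.

End Sphere.

Theorem lemma6p2 (R : realType) (d k : nat) (hk3 : (3 <= k)%N) (hkd : (k <= d.+1)%N) :
  k_pos_def k (@Qk1 R d k) /\
  (forall sigma : probability (vec R d) R, is_normalized_surface_measure sigma ->
   forall mu : probability (vec R d) R, sphere_prob mu ->
     energy k (@Qk1 R d k) sigma <= energy k (@Qk1 R d k) mu).
Proof.
case: k hk3 hkd => [|[|n]] // _ _.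
split; first split.
- by move=> x y z _ _ _; exact: Qk1_cfgC.
- by move=> z _ nu P N nuPN; exact: Qk1_cint_ge0.
- move=> sigma sigma_unif mu _.
  rewrite !energy_Qk1E ?finite_measure_sphere_lty // barycenter_surface_eq0 // bform0.
  by apply: mean_proj_mx_psd; exact: finite_measure_sphere_lty.
Qed.
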